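(* Let $P$ be a nonzero $n\times n$ real symmetric positive semidefinite matrix and let $\theta$ satisfy $0<\theta<\lambda_1(P)^{-1}$. Then: (1) the function $\vartheta\mapsto\gamma(\vartheta,P)$ is monotone increasing on $[0,\lambda_1(P)^{-1})$; (2) $\gamma(\theta,P)>0$; (3) if $Q$ is a symmetric positive semidefinite matrix with $P\succeq Q$, then $\gamma(\theta,P)\ge\gamma(\theta,Q)$.
   Context: $\lambda_1(P)$ is the largest eigenvalue of $P$; $\succeq$ is the Loewner order. For a symmetric matrix $P$ and real $\theta$ with $I-\theta P\succ0$, $\gamma(\theta,P)=\tfrac12\big[\log\det(I-\theta P)+\mathrm{tr}((I-\theta P)^{-1})-n\big]$. *)

From HB Require Import structures.
From mathcomp Require Import all_boot all_order all_algebra.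
From mathcomp Require Import all_classical all_reals all_analysis.
Set Implicit Arguments. Unset Strict Implicit. Unset Printing Implicit Defensive.
Import Order.TTheory GRing.Theory Num.Theory.
Local Open Scope ring_scope.
Local Open Scope classical_set_scope.

Definition sym_mx (R : realType) (n : nat) (P : 'M[R]_n) : Prop := P^T = P.

Definition psd (R : realType) (n : nat) (P : 'M[R]_n) : Prop :=
  forall v : 'cV[R]_n, 0 <= (v^T *m P *m v) 0 0.

Definition loewner_ge (R : realType) (n : nat) (P Q : 'M[R]_n) : Prop :=
  psd (P - Q).

Definition lambda1 (R : realType) (n : nat) (P : 'M[R]_n) : R :=
  sup [set a : R | eigenvalue P a].

Definition gamma (R : realType) (n : nat) (theta : R) (P : 'M[R]_n) : R :=
  let A := 1%:M - theta *: P in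
  (ln (\det A) + \tr (invmx A) - n%:R) / 2.

(* With Phi(A) := ln (det A) + tr (A^-1) we have gamma(t, P) = (Phi(I - t P) - n) / 2,
   and all three claims follow from one fact: Phi is antitone for the Loewner order
   on 0 < A <= B <= I, strictly unless A = B.  To see it, choose H with
   H B H^* = I and H A H^* = diag(c).  Then 0 < c_j <= 1, g_j := [H H^*]_jj >= 1,
   and Phi(A) - Phi(B) = sum_j (ln c_j + g_j (1/c_j - 1)) >= 0 by ln y <= y - 1.
   The matrices I - t P with t < 1/lambda_1(P) are positive definite by the Rayleigh
   bound x^* P x <= lambda_1(P) |x|^2.  The spectral theorem is only available over
   algebraically closed fields, so real symmetric matrices are complexified. *)

From HB Require Import structures.
From mathcomp Require Import all_boot all_order all_algebra.
From mathcomp Require Import all_classical all_reals all_analysis.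
From mathcomp Require Import complex ring.
Import Order.TTheory GRing.Theory Num.Theory.
Local Open Scope ring_scope.

Set Implicit Arguments. Unset Strict Implicit. Unset Printing Implicit Defensive.
Local Open Scope sesquilinear_scope.

Lemma eigenvalue_det (F : fieldType) n (M : 'M[F]_n) a :
  eigenvalue M a = (\det (a%:M - M) == 0).
Proof.
apply/eigenvalueP/det0P => [[v Mv v0] | [v v0 Mv]]; exists v => //.
  by rewrite mulmxBr Mv mul_mx_scalar subrr.
by apply/eqP; rewrite -mul_mx_scalar eq_sym -subr_eq0 -mulmxBr Mv.
Qed.

Lemma mxtrace_map (R S : pzRingType) (f : {rmorphism R -> S}) n (M : 'M[R]_n) :
  \tr (map_mx f M) = f (\tr M).
Proof. by rewrite rmorph_sum; apply: eq_bigr => j _; rewrite mxE. Qed.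

Lemma mulmx_trmx_gt0 (R : realDomainType) n (v : 'rV[R]_n) : v != 0 -> 0 < (v *m v^T) 0 0.
Proof.
have sq_ge0 j : 0 <= v 0 j * v^T j 0 by rewrite mxE -expr2 sqr_ge0.
move=> v0; rewrite mxE lt_def sumr_ge0 ?andbT //; apply: contra v0.
rewrite psumr_eq0 // => /allP v0; apply/eqP/rowP => j.
by have /= := v0 j (mem_index_enum j); rewrite mxE -expr2 sqrf_eq0 mxE => /eqP.
Qed.

Section QuadraticForms.
Variable C : numClosedFieldType.

Definition qform n (M : 'M[C]_n) (u : 'rV[C]_n) : C := (u *m M *m u ^t*) 0 0.

Definition posdefmx n (M : 'M[C]_n) := forall u, u != 0 -> 0 < qform M u.

Definition loewner_le n (M N : 'M[C]_n) := forall u, qform M u <= qform N u.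

Lemma qformB n (M N : 'M[C]_n) u : qform (M - N) u = qform M u - qform N u.
Proof. by rewrite /qform mulmxBr mulmxBl !mxE. Qed.

Lemma qformZ n (M : 'M[C]_n) a u : qform (a *: M) u = a * qform M u.
Proof. by rewrite /qform -scalemxAr -scalemxAl mxE. Qed.

Lemma qform_congr n (G M : 'M[C]_n) u : qform (G ^t* *m M *m G) u = qform M (u *m G ^t*).
Proof. by rewrite /qform trmx_mul map_mxM trmxCK !mulmxA. Qed.

Lemma qform_row n (H M : 'M[C]_n) j : qform M (row j H) = (H *m M *m H ^t*) j j.
Proof. by rewrite /qform -row_mul !mxE; apply: eq_bigr => k _; rewrite !mxE. Qed.

Lemma qform_diag n (d : 'rV[C]_n) u : qform (diag_mx d) u = \sum_j d 0 j * `|u 0 j| ^+ 2.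
Proof.
rewrite /qform mul_mx_diag mxE; apply: eq_bigr => j _.
by rewrite !mxE normCK mulrCA mulrA.
Qed.

Lemma qform1 n (u : 'rV[C]_n) : qform 1%:M u = \sum_j `|u 0 j| ^+ 2.
Proof. by rewrite -diag_const_mx qform_diag; apply: eq_bigr => j _; rewrite mxE mul1r. Qed.

Lemma qform1_gt0 n (u : 'rV[C]_n) : u != 0 -> 0 < qform 1%:M u.
Proof.
move=> u0; rewrite qform1 lt_def sumr_ge0 ?andbT => [|j _]; last exact: exprn_ge0.
apply: contra u0; rewrite psumr_eq0 => [/allP u0|j _]; last exact: exprn_ge0.
by apply/eqP/rowP => j; have /= := u0 j (mem_index_enum j); rewrite sqrf_eq0 normr_eq0 mxE => /eqP.
Qed.

Lemma qform_diag_ge0 n (d : 'rV[C]_n) u : (forall j, 0 <= d 0 j) -> 0 <= qform (diag_mx d) u.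
Proof. by move=> d0; rewrite qform_diag sumr_ge0 // => j _; rewrite mulr_ge0 ?exprn_ge0. Qed.

Lemma qform_diag_le n (d : 'rV[C]_n) u m :
  (forall j, d 0 j <= m) -> qform (diag_mx d) u <= m * qform 1%:M u.
Proof.
move=> dm; rewrite qform_diag qform1 mulr_sumr; apply: ler_sum => j _.
by rewrite ler_wpM2r ?exprn_ge0.
Qed.

Lemma unitarymx_adj_mul n (U : 'M[C]_n) : U \is unitarymx -> U ^t* *m U = 1%:M.
Proof. by move=> uU; rewrite -invmx_unitary // mulVmx // unitarymx_unit. Qed.

Lemma qform1_unitary n (U : 'M[C]_n) u : U \is unitarymx -> qform 1%:M (u *m U ^t*) = qform 1%:M u.
Proof. by move=> uU; rewrite -qform_congr mulmx1 unitarymx_adj_mul. Qed.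

Lemma qform1_row_unitary n (U : 'M[C]_n) j : U \is unitarymx -> qform 1%:M (row j U) = 1.
Proof. by move=> uU; rewrite qform_row mulmx1 (unitarymxP uU) mxE eqxx. Qed.

Lemma qform0 n (M : 'M[C]_n) : qform M 0 = 0.
Proof. by rewrite /qform !mul0mx mxE. Qed.

Lemma row_unitary_neq0 n (U : 'M[C]_n) j : U \is unitarymx -> row j U != 0.
Proof.
move=> uU; apply: contraPneq (qform1_row_unitary j uU) => ->.
by rewrite qform0 => /esym/eqP; rewrite oner_eq0.
Qed.

Lemma hermsymmx_congr n (G A : 'M[C]_n) : A \is hermsymmx -> G *m A *m G ^t* \is hermsymmx.
Proof.
move=> /is_hermitianmxP; rewrite expr0 scale1r => hA.
by apply/is_hermitianmxP; rewrite expr0 scale1r !trmx_mul !map_mxM trmxCK -hA mulmxA.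
Qed.

Lemma hermsymmx_spectral n (A : 'M[C]_n) : A \is hermsymmx ->
  exists U (d : 'rV[C]_n),
    [/\ U \is unitarymx, (forall j, d 0 j \is Num.real) & A = U ^t* *m diag_mx d *m U].
Proof.
move=> hA; exists (spectralmx A), (spectral_diag A); split.
- exact: spectral_unitarymx.
- by move=> j; apply: (mxOverP (hermitian_spectral_diag_real hA)).
- have /orthomx_spectralP {1}-> := hermitian_normalmx hA.
  by rewrite invmx_unitary // spectral_unitarymx.
Qed.

Lemma unitary_diag_congr n (U : 'M[C]_n) d : U \is unitarymx ->
  U *m (U ^t* *m diag_mx d *m U) *m U ^t* = diag_mx d.
Proof. by move=> uU; rewrite !mulmxA (unitarymxP uU) mul1mx mulmxtVK. Qed.

Lemma simultaneous_diag n (A B : 'M[C]_n) :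
  A \is hermsymmx -> B \is hermsymmx -> posdefmx B ->
  exists H (c : 'rV[C]_n), H *m B *m H ^t* = 1%:M /\ H *m A *m H ^t* = diag_mx c.
Proof.
move=> hA hB pB; have [V [b [uV _ eB]]] := hermsymmx_spectral hB.
have b_gt0 j : 0 < b 0 j.
  have := pB _ (row_unitary_neq0 j uV).
  by rewrite qform_row eB unitary_diag_congr // mxE eqxx mulr1n.
pose s := \row_j (sqrtC (b 0 j))^-1.
have s_gt0 j : 0 < s 0 j by rewrite mxE invr_gt0 sqrtC_gt0.
have sbs j : s 0 j * b 0 j * s 0 j = 1.
  rewrite mulrAC -expr2 mxE exprVn sqrtCK mulVf //; exact: lt0r_neq0.
(* S := diag(b)^(-1/2) V reduces B to the identity; it remains to diagonalize
   S A S^* unitarily. *)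
pose S := diag_mx s *m V.
have Sadj : S ^t* = V ^t* *m diag_mx s.
  rewrite trmx_mul map_mxM tr_diag_mx map_diag_mx; congr (_ *m diag_mx _).
  by apply/rowP => j; rewrite mxE; apply/CrealP/ger0_real/ltW.
have SBS : S *m B *m S ^t* = 1%:M.
  rewrite Sadj eB -!mulmxA [V *m (V ^t* *m _)]mulmxA (unitarymxP uV) mul1mx.
  rewrite [V *m (V ^t* *m _)]mulmxA (unitarymxP uV) mul1mx !mulmx_diag.
  rewrite -diag_const_mx; congr diag_mx; apply/rowP => j.
  by have := sbs j; rewrite !mxE mulrA.
have [W [c [uW _ eA]]] := hermsymmx_spectral (hermsymmx_congr S hA).
exists (W *m S), c; split.
- transitivity (W *m (S *m B *m S ^t*) *m W ^t*).
    by rewrite trmx_mul map_mxM !mulmxA.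
  by rewrite SBS mulmx1 (unitarymxP uW).
- by rewrite trmx_mul map_mxM -(unitary_diag_congr c uW) -eA !mulmxA.
Qed.

Lemma mulmx1_invmx n (A B : 'M[C]_n) : A *m B = 1%:M -> invmx A = B.
Proof.
move=> AB; have [uA _] := mulmx1_unit AB.
by rewrite -[RHS]mul1mx -(mulVmx uA) -mulmxA AB mulmx1.
Qed.

Lemma invmx_congr_diag n (H A : 'M[C]_n) (d : 'rV[C]_n) :
  H \in unitmx -> H ^t* \in unitmx -> (forall j, d 0 j != 0) ->
  H *m A *m H ^t* = diag_mx d -> invmx A = H ^t* *m diag_mx (\row_j (d 0 j)^-1) *m H.
Proof.
move=> uH uHt d0 eA; apply: mulmx1_invmx.
have -> : A = invmx H *m diag_mx d *m invmx (H ^t*).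
  by rewrite -eA !mulmxA mulVmx // mul1mx mulmxK.
rewrite !mulmxA mulmxKV // -(mulmxA (invmx H)) mulmx_diag.
have -> : \row_j (d 0 j * (\row_j (d 0 j)^-1) 0 j) = const_mx 1.
  by apply/rowP => j; rewrite !mxE mulfV.
by rewrite diag_const_mx mulmx1 mulVmx.
Qed.

Lemma mxtrace_congr_diag n (H : 'M[C]_n) (d : 'rV[C]_n) :
  \tr (H ^t* *m diag_mx d *m H) = \sum_j d 0 j * qform 1%:M (row j H).
Proof.
rewrite -mulmxA mxtrace_mulC -mulmxA; apply: eq_bigr => j _.
by rewrite mul_diag_mx mxE qform_row mulmx1.
Qed.

Lemma det_unitary_diag n (U : 'M[C]_n) (d : 'rV[C]_n) : U \is unitarymx ->
  \det (U ^t* *m diag_mx d *m U) = \prod_j d 0 j.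
Proof. by move=> uU; rewrite !det_mulmx mulrAC -det_mulmx unitarymx_adj_mul // det1 mul1r det_diag. Qed.

Lemma eigenvalue_unitary_diag n (U : 'M[C]_n) (d : 'rV[C]_n) a : U \is unitarymx ->
  eigenvalue (U ^t* *m diag_mx d *m U) a = [exists j, a == d 0 j].
Proof.
move=> uU; rewrite eigenvalue_det.
have -> : a%:M - U ^t* *m diag_mx d *m U = U ^t* *m diag_mx (const_mx a - d) *m U.
  rewrite linearB /= diag_const_mx mulmxBr mulmxBl scalar_mxC.
  by rewrite -[a%:M *m _ *m U]mulmxA unitarymx_adj_mul // mulmx1.
rewrite det_unitary_diag //.
apply/prodf_eq0/existsP => [[j _]|[j /eqP aj]]; first by rewrite !mxE subr_eq0; exists j.
by exists j; rewrite // !mxE aj subrr.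
Qed.

End QuadraticForms.

Section CongruentDiagonal.
Variables (C : numClosedFieldType) (n : nat) (H A B : 'M[C]_n) (d : 'rV[C]_n).
Hypotheses (HB : H *m B *m H ^t* = 1%:M) (HA : H *m A *m H ^t* = diag_mx d).

Let uH : H \in unitmx.
Proof. by have [+ _] := mulmx1_unit HB; rewrite !unitmx_mul => /andP[]. Qed.

Let uHt : H ^t* \in unitmx.
Proof. by have [_ +] := mulmx1_unit HB. Qed.

Lemma qform_row_congr1 j : qform B (row j H) = 1.
Proof. by rewrite qform_row HB mxE eqxx. Qed.

Lemma qform_row_congr_diag j : qform A (row j H) = d 0 j.
Proof. by rewrite qform_row HA mxE eqxx mulr1n. Qed.

Lemma det_congr_diag : \det A = \prod_j d 0 j * \det B.
Proof.
have /(congr1 determinant) := HA; have /(congr1 determinant) := HB.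
rewrite det_diag det1 !det_mulmx => dB <-.
by rewrite -[LHS]mulr1 -dB; ring.
Qed.

Lemma mxtrace_invmx_congr1 : \tr (invmx B) = \sum_j qform 1%:M (row j H).
Proof.
have HB1 : H *m B *m H ^t* = diag_mx (const_mx 1) by rewrite diag_const_mx.
rewrite (invmx_congr_diag uH uHt _ HB1) => [|j]; last by rewrite mxE oner_neq0.
by rewrite mxtrace_congr_diag; apply: eq_bigr => j _; rewrite !mxE invr1 mul1r.
Qed.

Lemma mxtrace_invmx_congr_diag : (forall j, d 0 j != 0) ->
  \tr (invmx A) = \sum_j (d 0 j)^-1 * qform 1%:M (row j H).
Proof.
move=> d0; rewrite (invmx_congr_diag uH uHt d0 HA) mxtrace_congr_diag.
by apply: eq_bigr => j _; rewrite mxE.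
Qed.

Lemma congr_diag1_eq : (forall j, d 0 j = 1) -> A = B.
Proof.
move=> d1; have : H *m A *m H ^t* = H *m B *m H ^t*.
  by rewrite HA HB -diag_const_mx; congr diag_mx; apply/rowP => j; rewrite d1 mxE.
by move/(congr1 (fun X => invmx H *m (X *m invmx (H ^t*)))); rewrite !mulmxK // !mulKmx.
Qed.

End CongruentDiagonal.

Section LogDet.
Variable R : realType.

Lemma ln_prod (I : finType) (F : I -> R) : (forall i, 0 < F i) ->
  ln (\prod_i F i) = \sum_i ln (F i).
Proof.
by move=> F0; rewrite -(eq_bigr _ (fun i _ => lnK (F0 i))) -expR_sum expRK.
Qed.

Lemma ln_le_subr1 (y : R) : 0 < y -> ln y <= y - 1.
Proof. by move=> y0; rewrite -[y in ln y](subrKC 1) le_ln1Dx // ltrBrDl subrr. Qed.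

Lemma ln_lt_subr1 (y : R) : 0 < y -> y != 1 -> ln y < y - 1.
Proof.
move=> y0 y1; rewrite -ltr_expR lnK ?posrE // -[X in X < _](subrKC 1).
by rewrite expR_gt1Dx // subr_eq0.
Qed.

Definition logdet_gap (c g : R) : R := ln c + g * (c^-1 - 1).

Lemma logdet_gap_ge0 (c g : R) : 0 < c <= 1 -> 1 <= g -> 0 <= logdet_gap c g.
Proof.
move=> /andP[c0 c1] g1; have ic1 : 0 <= c^-1 - 1 by rewrite subr_ge0 invf_ge1.
apply: (le_trans _ (lerD (lexx _) (ler_peMl ic1 g1))).
by rewrite -[c in ln c]invrK lnV ?posrE ?invr_gt0 // addrC subr_ge0 ln_le_subr1 ?invr_gt0.
Qed.

Lemma logdet_gap_gt0 (c g : R) : 0 < c < 1 -> 1 <= g -> 0 < logdet_gap c g.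
Proof.
move=> /andP[c0 c1] g1; have ic1 : 0 <= c^-1 - 1 by rewrite subr_ge0 invf_ge1 // ltW.
apply: (lt_le_trans _ (lerD (lexx _) (ler_peMl ic1 g1))).
rewrite -[c in ln c]invrK lnV ?posrE ?invr_gt0 // addrC subr_gt0 ln_lt_subr1 ?invr_gt0 //.
by rewrite invr_eq1 lt_eqF.
Qed.

End LogDet.

Section RealSymmetric.
Variable R : realType.
Local Notation C := R[i].
Local Notation mC := (map_mx (real_complex R)).
Local Open Scope complex_scope.

Lemma sym_hermsymmx n (M : 'M[R]_n) : M^T = M -> mC M \is hermsymmx.
Proof.
move=> sM; apply/is_hermitianmxP; rewrite expr0 scale1r.
by apply/matrixP => i j; rewrite !mxE conj_Creal ?complex_real // -[in LHS]sM mxE.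
Qed.

Lemma sym_spectral n (M : 'M[R]_n) : M^T = M ->
  exists U (r : 'I_n -> R), [/\ U \is unitarymx,
    mC M = U ^t* *m diag_mx (\row_j (r j)%:C) *m U &
    forall x, eigenvalue M x <-> exists j, x = r j].
Proof.
move=> sM; have [U [d [uU dR eM]]] := hermsymmx_spectral (sym_hermsymmx sM).
have dE : d = \row_j (complex.Re (d 0 j))%:C by apply/rowP => j; rewrite mxE RRe_real.
exists U, (fun j => complex.Re (d 0 j)); split; rewrite -?dE //.
move=> x; rewrite -(eigenvalue_map (real_complex R)) eM eigenvalue_unitary_diag //.
split=> [/existsP[j /eqP xj]|[j ->]]; first by exists j; apply: complexI; rewrite xj; apply/esym/RRe_real.
by apply/existsP; exists j; apply/eqP/RRe_real.
Qed.

Lemma psd_eigenvalue_ge0 n (M : 'M[R]_n) x : psd M -> eigenvalue M x -> 0 <= x.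
Proof.
move=> pM /eigenvalueP[v vM v0]; have := pM v^T.
by rewrite trmxK vM -scalemxAl mxE pmulr_lge0 // mulmx_trmx_gt0.
Qed.

Lemma psd_qform_ge0 n (M : 'M[R]_n) u : M^T = M -> psd M -> 0 <= qform (mC M) u.
Proof.
move=> sM pM; have [U [r [uU eM eigM]]] := sym_spectral sM.
rewrite eM qform_congr qform_diag_ge0 // => j; rewrite mxE ler0c.
by apply: (psd_eigenvalue_ge0 pM); apply/eigM; exists j.
Qed.

Lemma qform_le_lambda1 n (M : 'M[R]_n) u : M^T = M ->
  qform (mC M) u <= (lambda1 M)%:C * qform 1%:M u.
Proof.
move=> sM; have [U [r [uU eM eigM]]] := sym_spectral sM.
rewrite eM qform_congr -(qform1_unitary u uU) qform_diag_le // => j; rewrite mxE lecR.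
apply: sup_upper_bound; last by apply/eigM; exists j.
split; first by exists (r j); apply/eigM; exists j.
exists (\sum_k `|r k|) => _ /eigM[k ->].
by rewrite (le_trans (ler_norm _)) // (bigD1 k) //= lerDl sumr_ge0.
Qed.

Lemma posdef_det_gt0 n (M : 'M[R]_n) : M^T = M -> posdefmx (mC M) -> 0 < \det M.
Proof.
move=> sM pM; have [U [r [uU eM _]]] := sym_spectral sM.
have r_gt0 j : 0 < r j.
  have := pM _ (row_unitary_neq0 j uU).
  by rewrite qform_row eM unitary_diag_congr // mxE eqxx mulr1n mxE ltcR.
have : (\det M)%:C = \prod_j (r j)%:C.
  by rewrite -det_map_mx eM det_unitary_diag //; apply: eq_bigr => j _; rewrite mxE.
by rewrite -rmorph_prod => /complexI ->; apply: prodr_gt0.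
Qed.

Definition logdet_trinv n (A : 'M[R]_n) : R := ln (\det A) + \tr (invmx A).

Lemma logdet_trinv_decomp n (A B : 'M[R]_n) : A^T = A -> B^T = B ->
  posdefmx (mC A) -> loewner_le (mC A) (mC B) -> loewner_le (mC B) 1%:M ->
  exists c g : 'I_n -> R, [/\ forall j, 0 < c j <= 1, forall j, 1 <= g j,
    logdet_trinv A = logdet_trinv B + \sum_j logdet_gap (c j) (g j) &
    (forall j, c j = 1) -> A = B].
Proof.
move=> sA sB pA AB B1.
have pB : posdefmx (mC B) by move=> u u0; exact: lt_le_trans (pA u u0) (AB u).
have [H [d [HB HA]]] := simultaneous_diag (sym_hermsymmx sA) (sym_hermsymmx sB) pB.
have rowH0 j : row j H != 0.
  apply: contraPneq (qform_row_congr1 HB j) => ->.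
  by rewrite qform0 => /esym/eqP; rewrite oner_eq0.
have d_gt0 j : 0 < d 0 j by rewrite -(qform_row_congr_diag HA) pA.
have d_le1 j : d 0 j <= 1.
  by rewrite -(qform_row_congr_diag HA) -(qform_row_congr1 HB j) AB.
have q_ge1 j : 1 <= qform 1%:M (row j H) by have := B1 (row j H); rewrite qform_row_congr1.
pose c j := complex.Re (d 0 j); pose g j := complex.Re (qform 1%:M (row j H)).
have cE j : d 0 j = (c j)%:C by apply/esym/RRe_real/ger0_real/ltW.
have gE j : qform 1%:M (row j H) = (g j)%:C.
  by apply/esym/RRe_real/ger0_real/(le_trans ler01).
have detA : \det A = \prod_j c j * \det B.
  apply: (@complexI R); rewrite rmorphM rmorph_prod -!det_map_mx (det_congr_diag HB HA).
  by congr (_ * _); apply: eq_bigr => j _; rewrite cE.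
have trA : \tr (invmx A) = \sum_j (c j)^-1 * g j.
  apply: (@complexI R); rewrite -mxtrace_map map_invmx rmorph_sum.
  rewrite (mxtrace_invmx_congr_diag HB HA) => [|j]; last by rewrite lt0r_neq0.
  by apply: eq_bigr => j _; rewrite rmorphM fmorphV cE gE.
have trB : \tr (invmx B) = \sum_j g j.
  apply: (@complexI R); rewrite -mxtrace_map map_invmx rmorph_sum.
  by rewrite (mxtrace_invmx_congr1 HB); apply: eq_bigr => j _; rewrite gE.
exists c, g; split.
- by move=> j; rewrite -ltcR -lecR -cE d_gt0 d_le1.
- by move=> j; rewrite -lecR -gE q_ge1.
- have -> : \sum_j logdet_gap (c j) (g j) =
            \sum_j ln (c j) + \sum_j (c j)^-1 * g j - \sum_j g j.
    by rewrite -big_split -sumrB; apply: eq_bigr => j _; rewrite /logdet_gap /=; ring.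
  have c_gt0 j : 0 < c j by rewrite -ltcR -cE.
  rewrite /logdet_trinv detA trA trB lnM ?posrE ?prodr_gt0 ?posdef_det_gt0 //.
  by rewrite ln_prod //; ring.
- move=> c1; apply: map_mx_inj.
  by apply: (congr_diag1_eq HB HA) => j; rewrite cE c1.
Qed.

Lemma logdet_trinv_antitone n (A B : 'M[R]_n) : A^T = A -> B^T = B ->
  posdefmx (mC A) -> loewner_le (mC A) (mC B) -> loewner_le (mC B) 1%:M ->
  logdet_trinv B <= logdet_trinv A /\ (A != B -> logdet_trinv B < logdet_trinv A).
Proof.
move=> sA sB pA AB B1; have [c [g [c01 g1 -> c1]]] := logdet_trinv_decomp sA sB pA AB B1.
have gap_ge0 j : 0 <= logdet_gap (c j) (g j) by apply: logdet_gap_ge0.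
rewrite lerDl sumr_ge0 //; split => // AneB.
have [j cj_lt1] : exists j, c j < 1.
  apply/existsP; apply: contraNT AneB => /existsPn cj_ge1; apply/eqP/c1 => j.
  by have /andP[_] := c01 j; rewrite le_eqVlt (negbTE (cj_ge1 j)) orbF => /eqP.
have cj : 0 < c j < 1 by have /andP[-> _] := c01 j.
rewrite ltrDl (bigD1 j) //=; apply: lt_le_trans (logdet_gap_gt0 cj (g1 j)) _.
by rewrite lerDl sumr_ge0.
Qed.

Lemma psd_loewner_le n (A B : 'M[R]_n) : A^T = A -> B^T = B -> psd (B - A) ->
  loewner_le (mC A) (mC B).
Proof.
move=> sA sB pBA u; rewrite -subr_ge0 -qformB -map_mxB psd_qform_ge0 //.
by rewrite linearB /= sA sB.
Qed.

Lemma posdef_1_subZ n (P : 'M[R]_n) t : P^T = P -> 0 <= t -> t * lambda1 P < 1 ->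
  posdefmx (mC (1%:M - t *: P)).
Proof.
move=> sP t0 tl u u0; rewrite map_mxB map_mx1 map_mxZ qformB qformZ subr_gt0.
apply: le_lt_trans (ler_wpM2l _ (qform_le_lambda1 u sP)) _; first by rewrite ler0c.
by rewrite mulrA -[X in _ < X]mul1r ltr_pM2r ?qform1_gt0 // -rmorphM ltcR.
Qed.

Lemma psdZ n (P : 'M[R]_n) t : 0 <= t -> psd P -> psd (t *: P).
Proof. by move=> t0 pP v; rewrite -scalemxAr -scalemxAl mxE mulr_ge0. Qed.

Lemma gammaE n t (P : 'M[R]_n) :
  gamma t P = (logdet_trinv (1%:M - t *: P) - n%:R) / 2.
Proof. by []. Qed.

Lemma gammaZ n t (P : 'M[R]_n) : gamma t P = gamma 1 (t *: P).
Proof. by rewrite /gamma scale1r. Qed.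

Lemma gamma0 n (P : 'M[R]_n) : gamma 0 P = 0.
Proof. by rewrite gammaE scale0r subr0 /logdet_trinv det1 ln1 invmx1 mxtrace1 add0r subrr mul0r. Qed.

Lemma gamma1_le n (X Y : 'M[R]_n) : X^T = X -> Y^T = Y ->
  psd X -> psd (Y - X) -> posdefmx (mC (1%:M - Y)) ->
  gamma 1 X <= gamma 1 Y /\ (X != Y -> gamma 1 X < gamma 1 Y).
Proof.
move=> sX sY pX pYX pY.
have s1 (Z : 'M[R]_n) : Z^T = Z -> (1%:M - Z)^T = 1%:M - Z by move=> sZ; rewrite linearB /= trmx1 sZ.
have pXY : psd ((1%:M - X) - (1%:M - Y)) by rewrite opprB addrC addrA subrK.
have p1X : psd (1%:M - (1%:M - X)) by rewrite subKr.
have B1 : loewner_le (mC (1%:M - X)) 1%:M.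
  by have := psd_loewner_le (s1 _ sX) (trmx1 _ _) p1X; rewrite map_mx1.
have [le lt] := logdet_trinv_antitone (s1 _ sY) (s1 _ sX) pY
  (psd_loewner_le (s1 _ sY) (s1 _ sX) pXY) B1.
rewrite !gammaE !scale1r !ler_pM2r ?ltr_pM2r ?lerD2r ?ltrD2r //; split => // XY.
by apply: lt; apply: contra_neq XY => /subrI.
Qed.

End RealSymmetric.

Close Scope sesquilinear_scope.
Unset Implicit Arguments.
Set Strict Implicit.

Theorem proposition2 (R : realType) (n : nat) (P : 'M[R]_n) (theta : R) :
  sym_mx P -> psd P -> P != 0 ->
  0 < theta -> theta < (lambda1 P)^-1 ->
  (forall a b : R, 0 <= a -> a < b -> b < (lambda1 P)^-1 ->
     gamma a P < gamma b P) /\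
  0 < gamma theta P /\
  (forall Q : 'M[R]_n, sym_mx Q -> psd Q -> loewner_ge P Q ->
     gamma theta Q <= gamma theta P).
Proof.
rewrite /sym_mx => sP pP P0 th0 thl.
have l_gt0 : 0 < lambda1 P by rewrite -invr_gt0 (lt_trans th0 thl).
have symZ t : (t *: P)^T = t *: P by rewrite linearZ /= sP.
have posdef t : 0 <= t -> t < (lambda1 P)^-1 -> posdefmx (map_mx (real_complex R) (1%:M - t *: P)).
  by move=> t0 tl; apply: posdef_1_subZ; rewrite // -ltr_pdivlMr // div1r.
have gamma_mono a b : 0 <= a -> a < b -> b < (lambda1 P)^-1 -> gamma a P < gamma b P.
  move=> a0 ab bl; rewrite !(gammaZ _ P).
  have pbaP : psd (b *: P - a *: P) by rewrite -scalerBl; apply: psdZ; rewrite // subr_ge0 ltW.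
  have [_ ->] := gamma1_le (symZ a) (symZ b) (psdZ a0 pP) pbaP (posdef b (le_trans a0 (ltW ab)) bl) => //.
  have : (b - a) *: P != 0 by rewrite scaler_eq0 negb_or subr_eq0 gt_eqF.
  by apply: contra_neq => e; rewrite scalerBl e subrr.
split => //; split; first by have := gamma_mono 0 theta (lexx 0) th0 thl; rewrite gamma0.
move=> Q sQ pQ PQ; rewrite !(gammaZ theta).
have pPQ : psd (theta *: P - theta *: Q) by rewrite -scalerBr; apply: psdZ; rewrite // ltW.
have symQ : (theta *: Q)^T = theta *: Q by rewrite linearZ /= sQ.
by have [] := gamma1_le symQ (symZ theta) (psdZ (ltW th0) pQ) pPQ (posdef _ (ltW th0) thl).
Qed.
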